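(* For any function $g=g(\mathbf{x}_p)\in C^1(\mathbb{R}^{p+1},\mathbb{A})$ (depending only on $\mathbf{x}_p$) and any $k\in\mathbb{N}$: $$D_{\mathbf{x}}(\underline{\mathbf{x}}_q^{2k}g)=\underline{\mathbf{x}}_q^{2k}(D_{\mathbf{x}_p}g)-2k\,\underline{\mathbf{x}}_q^{2k-1}g,\qquad D_{\mathbf{x}}(\underline{\mathbf{x}}_q^{2k+1}g)=\underline{\mathbf{x}}_q^{2k+1}(\overline{D}_{\mathbf{x}_p}g)-(2k+q)\,\underline{\mathbf{x}}_q^{2k}g,$$ $$\overline{D}_{\mathbf{x}}(\underline{\mathbf{x}}_q^{2k}g)=\underline{\mathbf{x}}_q^{2k}(\overline{D}_{\mathbf{x}_p}g)+2k\,\underline{\mathbf{x}}_q^{2k-1}g,\qquad \overline{D}_{\mathbf{x}}(\underline{\mathbf{x}}_q^{2k+1}g)=\underline{\mathbf{x}}_q^{2k+1}(D_{\mathbf{x}_p}g)+(2k+q)\,\underline{\mathbf{x}}_q^{2k}g.$$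
   Context: Let $\mathbb{A}$ be a real alternative algebra (the associator $[a,b,c]=(ab)c-a(bc)$ is an alternating trilinear function) with unity $1$, of finite real dimension $d>1$, equipped with an anti-involution $a\mapsto a^c$ (real linear, $a^c=a$ for real $a$, $(a^c)^c=a$, $(ab)^c=b^ca^c$). Let $t(x)=x+x^c$, $n(x)=xx^c$, $\mathbb{S}_{\mathbb{A}}=\{x: t(x)=0,\ n(x)=1\}$ (assumed nonempty) and $Q_{\mathbb{A}}=\mathbb{R}\cup\{x: t(x)\in\mathbb{R},\ n(x)\in\mathbb{R},\ 4n(x)>t(x)^2\}$. Let $M$ be a real subspace with $\mathbb{R}\subsetneq M\subseteq Q_{\mathbb{A}}$ having a basis $(v_0,\dots,v_m)$, $m\ge1$, $v_0=1$, $v_s\in\mathbb{S}_{\mathbb{A}}$, $v_sv_t=-v_tv_s$ for distinct $s,t\ge1$. Identify $x=\sum x_sv_s\in M$ with $(x_0,\dots,x_m)\in\mathbb{R}^{m+1}$; differentiate componentwise. Fix $p\in\{0,\dots,m-1\}$, $q=m-p$; $\mathbf{x}=\mathbf{x}_p+\underline{\mathbf{x}}_q$ with $\mathbf{x}_p=\sum_{s=0}^px_sv_s\in\mathbb{R}^{p+1}$, $\underline{\mathbf{x}}_q=\sum_{s=p+1}^m x_sv_s$; powers $\underline{\mathbf{x}}_q^j$ are taken in $\mathbb{A}$ (terms with coefficient $2k=0$ vanish). $D_{\mathbf{x}_p}f=\sum_{s=0}^p v_s\partial_{x_s}f$, $\overline{D}_{\mathbf{x}_p}f=\partial_{x_0}f-\sum_{s=1}^pv_s\partial_{x_s}f$,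 $D_{\mathbf{x}}f=\sum_{s=0}^mv_s\partial_{x_s}f$, $\overline{D}_{\mathbf{x}}f=\partial_{x_0}f-\sum_{s=1}^mv_s\partial_{x_s}f$ (all acting on the left). *)

From HB Require Import structures.
From mathcomp Require Import all_boot all_order all_algebra.
From mathcomp Require Import all_classical all_reals all_analysis.
Set Implicit Arguments.
Unset Strict Implicit.
Unset Printing Implicit Defensive.
Import Order.TTheory GRing.Theory Num.Theory.
Import numFieldNormedType.Exports.
Local Open Scope ring_scope.

(* The d-dimensional real algebra A is modelled on its underlying vector
   space R^d = 'rV[R]_d, with an explicit (bilinear) multiplication [mul],
   unity [one] and anti-involution [conj]. *)

Section Algebra.
Variables (R : realType) (d : nat).
Local Notation A := 'rV[R]_d.
Variables (mul : A -> A -> A) (one : A) (conj : A -> A).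

Definition is_real_elt (x : A) : Prop := exists r : R, x = r *: one.

Definition associator (a b c : A) : A := mul (mul a b) c - mul a (mul b c).

Definition alt_algebra_anti_inv : Prop :=
  [/\ (1 < d)%N,
      (forall (r : R) (a b c : A), mul (r *: a + b) c = r *: mul a c + mul b c)
      /\ (forall (r : R) (a b c : A), mul a (r *: b + c) = r *: mul a b + mul a c),
      (forall a : A, mul one a = a /\ mul a one = a),
      (forall a b : A, [/\ associator a a b = 0, associator a b a = 0
                         & associator b a a = 0])
    &
      [/\ (forall (r : R) (a b : A), conj (r *: a + b) = r *: conj a + conj b),
          (forall r : R, conj (r *: one) = r *: one),
          (forall a : A, conj (conj a) = a)
        & (forall a b : A, conj (mul a b) = mul (conj b) (conj a))]].

Definition trA (x : A) : A := x + conj x.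
Definition nrmA (x : A) : A := mul x (conj x).

Definition in_SA (x : A) : Prop := trA x = 0 /\ nrmA x = one.

Definition in_QA (x : A) : Prop :=
  is_real_elt x \/
  exists t n : R, [/\ trA x = t *: one, nrmA x = n *: one & t ^+ 2 < 4 * n].

Fixpoint apow (a : A) (j : nat) : A :=
  if j is j'.+1 then mul a (apow a j') else one.

(* (v_0, ..., v_m) is a basis of a subspace M with R ⊊ M ⊆ Q_A,
   v_0 = 1, v_s ∈ S_A and pairwise anticommuting for s >= 1 *)
Definition paravector_basis (m : nat) (v : 'I_m.+1 -> A) : Prop :=
  [/\ (1 <= m)%N /\ v ord0 = one,
      (forall s : 'I_m.+1, s != ord0 -> in_SA (v s)),
      (forall s t : 'I_m.+1, s != ord0 -> t != ord0 -> s != t ->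
          mul (v s) (v t) = - mul (v t) (v s)),
      (forall c : 'I_m.+1 -> R, \sum_(s < m.+1) c s *: v s = 0 ->
          forall s, c s = 0)
    &
      (forall c : 'I_m.+1 -> R, in_QA (\sum_(s < m.+1) c s *: v s))].

Definition partial (n : nat) (s : 'I_n) (f : 'rV[R]_n -> A) (x : 'rV[R]_n) : A :=
  'D_(delta_mx ord0 s) f x.

Definition C1 (n : nat) (f : 'rV[R]_n -> A) : Prop :=
  forall s : 'I_n, (forall x, derivable f x (delta_mx ord0 s))
                   /\ continuous (partial s f).

Definition Dop (n : nat) (w : 'I_n.+1 -> A) (f : 'rV[R]_n.+1 -> A) (x : 'rV[R]_n.+1) : A :=
  \sum_(s < n.+1) mul (w s) (partial s f x).

Definition Dbar (n : nat) (w : 'I_n.+1 -> A) (f : 'rV[R]_n.+1 -> A) (x : 'rV[R]_n.+1) : A :=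
  partial ord0 f x - \sum_(s < n.+1 | s != ord0) mul (w s) (partial s f x).

Definition xpart (m p : nat) (x : 'rV[R]_m.+1) : 'rV[R]_p.+1 :=
  \row_(i < p.+1) x ord0 (inord i).

Definition vpart (m p : nat) (v : 'I_m.+1 -> A) : 'I_p.+1 -> A :=
  fun i => v (inord i).

Definition xq (m p : nat) (v : 'I_m.+1 -> A) (x : 'rV[R]_m.+1) : A :=
  \sum_(s < m.+1 | (p < s)%N) x ord0 s *: v s.

End Algebra.
Arguments vpart {R d m} p v i.

(* Since the v_s (s > p) square to -1 and anticommute, x_q^2 = -|x_q|^2 is a real
   scalar, so x_q^(2k) = (-|x_q|^2)^k and x_q^(2k+1) = (-|x_q|^2)^k x_q.  Split the
   Dirac operator as d/dx_0 + (vector part in x_p) + D_{x_q}.  Along x_0, ..., x_p only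
   g varies; moving v_s (1 <= s <= p) across x_q^j costs the sign (-1)^j, because v_s
   anticommutes with x_q, and this sign exchanges D_{x_p} with its conjugate for odd j.
   Along x_s with s > p only the polynomial (-|x_q|^2)^k and the factor x_q vary, and
   summing v_s times these derivatives gives D_{x_q} x_q^(2k) = -2k x_q^(2k-1) and
   D_{x_q} x_q^(2k+1) = -(2k+q) x_q^(2k), the q coming from v_s^2 = -1.  Products are
   only ever re-associated through the left alternative law and its linearization. *)

From HB Require Import structures.
From mathcomp Require Import all_boot all_order all_algebra.
From mathcomp Require Import all_classical all_reals all_analysis.
From mathcomp Require Import ring.
Import Order.TTheory GRing.Theory Num.Theory.
Import numFieldNormedType.Exports.
Local Open Scope ring_scope.
Set Implicit Arguments.
Unset Strict Implicit.
Unset Printing Implicit Defensive.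

Section Bilinear.
Variables (R : pzRingType) (A : lmodType R) (mul : A -> A -> A).
Hypothesis mul_linl : forall (r : R) (a b c : A), mul (r *: a + b) c = r *: mul a c + mul b c.
Hypothesis mul_linr : forall (r : R) (a b c : A), mul a (r *: b + c) = r *: mul a b + mul a c.

Lemma amulDl a b c : mul (a + b) c = mul a c + mul b c.
Proof. by have := mul_linl 1 a b c; rewrite !scale1r. Qed.

Lemma amulDr a b c : mul a (b + c) = mul a b + mul a c.
Proof. by have := mul_linr 1 a b c; rewrite !scale1r. Qed.

Lemma amul0l c : mul 0 c = 0.
Proof. by apply: (addrI (mul 0 c)); rewrite -amulDl !addr0. Qed.

Lemma amul0r a : mul a 0 = 0.
Proof. by apply: (addrI (mul a 0)); rewrite -amulDr !addr0. Qed.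

Lemma amulZl r a c : mul (r *: a) c = r *: mul a c.
Proof. by rewrite -[r *: a]addr0 mul_linl amul0l addr0. Qed.

Lemma amulZr r a b : mul a (r *: b) = r *: mul a b.
Proof. by rewrite -[r *: b]addr0 mul_linr amul0r addr0. Qed.

Lemma amulNr a b : mul a (- b) = - mul a b.
Proof. by rewrite -scaleN1r amulZr scaleN1r. Qed.

Lemma amul_suml (I : Type) (r : seq I) (P : pred I) (F : I -> A) c :
  mul (\sum_(i <- r | P i) F i) c = \sum_(i <- r | P i) mul (F i) c.
Proof. by elim/big_rec2: _ => [|i x y _ <-]; rewrite ?amul0l ?amulDl. Qed.

Lemma amul_sumr (I : Type) (r : seq I) (P : pred I) (F : I -> A) a :
  mul a (\sum_(i <- r | P i) F i) = \sum_(i <- r | P i) mul a (F i).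
Proof. by elim/big_rec2: _ => [|i x y _ <-]; rewrite ?amul0r ?amulDr. Qed.

End Bilinear.

Lemma sum_antisym_offdiag (R : numFieldType) (V : lmodType R) (I : finType)
    (P : pred I) (G : I -> I -> V) :
  (forall s t, P s -> P t -> s != t -> G s t = - G t s) ->
  \sum_(s | P s) \sum_(t | P t) G s t = \sum_(s | P s) G s s.
Proof.
move=> G_anti; pose H s t := if s == t then 0 else G s t.
have -> : \sum_(s | P s) \sum_(t | P t) G s t
    = \sum_(s | P s) G s s + \sum_(s | P s) \sum_(t | P t) H s t.
  rewrite -big_split; apply: eq_bigr => s Ps.
  rewrite (bigD1 s) //= [X in _ = _ + X](bigD1 s) //= /H eqxx add0r.
  by congr (_ + _); apply: eq_bigr => t /andP[_ /negbTE]; rewrite eq_sym => ->.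
set S := \sum_(s | P s) _; suff -> : S = 0 by rewrite addr0.
have S_opp : S = - S.
  rewrite /S [LHS]exchange_big -sumrN; apply: eq_bigr => i Pi.
  rewrite -sumrN; apply: eq_bigr => j Pj; rewrite /H.
  case: (eqVneq i j) => [_|ij]; first by rewrite oppr0.
  by apply: G_anti; rewrite // eq_sym.
have /eqP : (2%:R : R) *: S = 0 by rewrite scaler_nat mulr2n {1}S_opp addNr.
by rewrite scaler_eq0 pnatr_eq0 => /eqP.
Qed.

Section Alternative.
Variables (R : pzRingType) (A : lmodType R) (mul : A -> A -> A) (one : A).
Hypothesis mul_linl : forall (r : R) (a b c : A), mul (r *: a + b) c = r *: mul a c + mul b c.
Hypothesis mul_linr : forall (r : R) (a b c : A), mul a (r *: b + c) = r *: mul a b + mul a c.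
Hypothesis mul1l : forall a, mul one a = a.
Hypothesis mul_alt : forall a b, mul (mul a a) b = mul a (mul a b).

Lemma amul_sqr_scale a r b : mul a a = r *: one -> mul a (mul a b) = r *: b.
Proof. by move=> aa; rewrite -mul_alt aa (amulZl mul_linl) mul1l. Qed.

(* Linearize the left alternative law at [a + c]. *)
Lemma amul_anticomm a c b :
  mul a c = - mul c a -> mul a (mul c b) = - mul c (mul a b).
Proof.
move=> ac; apply/eqP; rewrite -addr_eq0; apply/eqP.
have sq : mul (a + c) (a + c) = mul a a + mul c c.
  by rewrite (amulDl mul_linl) !(amulDr mul_linr) ac addrA addrNK.
have := mul_alt (a + c) b.
rewrite sq (amulDl mul_linl) !mul_alt !(amulDl mul_linl) !(amulDr mul_linr) => E.
apply: (addrI (mul a (mul a b))); apply: (addIr (mul c (mul c b))).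
by rewrite addr0 E !addrA.
Qed.
End Alternative.

Section DirectionalDerivative.
Variables (R : realType) (V V' W : normedModType R).
Local Open Scope classical_set_scope.

Lemma is_derive_line (f : V -> W) (f' : V' -> W) a a' v v' df :
  (forall h : R, f (h *: v + a) = f' (h *: v' + a')) ->
  is_derive a' v' f' df -> is_derive a v f df.
Proof.
move=> ff' [f'_ex f'_val].
have fa : f a = f' a' by have := ff' 0; rewrite !scale0r !add0r.
have E : (fun h : R => h^-1 *: ((f \o shift a) (h *: v) - f a))
       = (fun h : R => h^-1 *: ((f' \o shift a') (h *: v') - f' a')).
  by apply/funext => h /=; rewrite ff' fa.
by apply: DeriveDef; rewrite /derivable /derive E.
Qed.

Lemma is_deriveZl (f : V -> R) (w : W) x v df :
  is_derive x v f df -> is_derive x v (fun y => f y *: w) (df *: w).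
Proof.
move=> [f_ex f_val].
have E : (fun h : R => h^-1 *: (((fun y => f y *: w) \o shift x) (h *: v) - f x *: w))
       = (fun h : R => (h^-1 *: ((f \o shift x) (h *: v) - f x)) *: w).
  by apply/funext => h /=; rewrite -scalerBl scalerA.
have cvg_w : (fun h : R => (h^-1 *: ((f \o shift x) (h *: v) - f x)) *: w) @ 0^' --> df *: w.
  by rewrite -f_val; apply: cvgZr_tmp.
by apply: DeriveDef; rewrite /derivable /derive E; [exact: cvgP cvg_w | exact: cvg_lim cvg_w].
Qed.

Lemma is_derive_coord n (f : V -> 'rV[R]_n) (i : 'I_n) x v df :
  is_derive x v f df -> is_derive x v (fun y => f y ord0 i) (df ord0 i).
Proof.
move=> [f_ex <-]; apply: DeriveDef; first exact: (derivable_mxP _ _ _).1 f_ex ord0 i.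
by rewrite derive_mx // mxE.
Qed.

End DirectionalDerivative.

Lemma partialE (R : realType) (d n : nat) (s : 'I_n) (f : 'rV[R]_n -> 'rV[R]_d) x df :
  is_derive x (delta_mx ord0 s) f df -> partial s f x = df.
Proof. by case. Qed.

Section QuadraticPower.
Variables (R : realType) (r a : R) (k : nat).
Let Q : {poly R} := - (r%:P + 'X * ((2 * a)%:P + 'X)).
Let hornerQ h : Q.[h] = - (r + h * (2 * a + h)). Proof. by rewrite /Q !hornerE. Qed.

Lemma is_derive_quad_pow :
  is_derive (0 : R) 1 (fun h : R => (- (r + h * (2 * a + h))) ^+ k)
    (k%:R * (- r) ^+ k.-1 * (- (2 * a))).
Proof.
have -> : (fun h : R => (- (r + h * (2 * a + h))) ^+ k) = horner (Q ^+ k).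
  by apply/funext => h; rewrite horner_exp hornerQ.
apply: is_derive_eq; rewrite deriv_exp /Q !(derivN, derivD, derivM, derivC, derivX) !hornerE.
rewrite hornerMn hornerM horner_exp !hornerE -mulr_natl; ring.
Qed.

Lemma is_derive_quad_powX :
  is_derive (0 : R) 1 (fun h : R => (- (r + h * (2 * a + h))) ^+ k * h) ((- r) ^+ k).
Proof.
have -> : (fun h : R => (- (r + h * (2 * a + h))) ^+ k * h) = horner (Q ^+ k * 'X).
  by apply/funext => h; rewrite hornerM horner_exp hornerQ hornerX.
apply: is_derive_eq; rewrite derivM derivX deriv_exp /Q !(derivN, derivD, derivM, derivC, derivX).
rewrite hornerD !hornerM hornerMn hornerM !horner_exp !hornerE; ring.
Qed.
End QuadraticPower.

Definition normq2 (R : realType) (m p : nat) (x : 'rV[R]_m.+1) : R :=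
  \sum_(s < m.+1 | (p < s)%N) x ord0 s ^+ 2.

Section CoordinateLine.
Variables (R : realType) (d m p : nat) (v : 'I_m.+1 -> 'rV[R]_d).
Variables (x : 'rV[R]_m.+1) (h : R).
Hypothesis le_pm : (p <= m)%N.
Local Notation line s := (h *: delta_mx ord0 s + x).

Lemma line_coord s t : (line s) ord0 t = h * (t == s)%:R + x ord0 t.
Proof. by rewrite !mxE. Qed.

Lemma line_coord_off s t : t != s -> (line s) ord0 t = x ord0 t.
Proof. by move=> /negbTE ts; rewrite line_coord ts mulr0 add0r. Qed.

Lemma inord_lowK (i : 'I_p.+1) : (inord i : 'I_m.+1) = i :> nat.
Proof. by rewrite inordK // ltnS (leq_trans _ le_pm) // -ltnS. Qed.

Lemma inord_low_neq (i : 'I_p.+1) (t : 'I_m.+1) : (p < t)%N -> t != inord i.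
Proof. by apply: contraTneq => ->; rewrite inord_lowK -leqNgt -ltnS. Qed.

Lemma xq_line_low (i : 'I_p.+1) : xq p v (line (inord i)) = xq p v x.
Proof. by apply: eq_bigr => t pt; rewrite line_coord_off // inord_low_neq. Qed.

Lemma xpart_line_low (i : 'I_p.+1) :
  xpart p (line (inord i)) = h *: delta_mx ord0 i + xpart p x.
Proof.
by apply/rowP => j; rewrite !mxE !eqxx /= -(inj_eq val_inj) /= !inord_lowK.
Qed.

Lemma xq_line_high (s : 'I_m.+1) : (p < s)%N -> xq p v (line s) = h *: v s + xq p v x.
Proof.
move=> ps; rewrite /xq (bigD1 s) //= [in RHS](bigD1 s) //= line_coord eqxx mulr1 scalerDl addrA.
by congr (_ + _); apply: eq_bigr => t /andP[_ ts]; rewrite line_coord_off.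
Qed.

Lemma normq2_line_high (s : 'I_m.+1) : (p < s)%N ->
  normq2 p (line s) = normq2 p x + h * (2 * x ord0 s + h).
Proof.
move=> ps; rewrite /normq2 (bigD1 s) //= [in RHS](bigD1 s) //= line_coord eqxx mulr1.
rewrite (eq_bigr (fun t => x ord0 t ^+ 2)) => [|t /andP[_ ts]]; last by rewrite line_coord_off.
ring.
Qed.

Lemma xpart_line_high (s : 'I_m.+1) : (p < s)%N -> xpart p (line s) = xpart p x.
Proof.
move=> ps; apply/rowP => j; rewrite [LHS]mxE [RHS]mxE line_coord_off //.
by apply: contraTneq ps => <-; rewrite inord_lowK -leqNgt -ltnS.
Qed.

End CoordinateLine.

Section AlgebraProduct.
Variables (R : realType) (d : nat).
Local Notation A := 'rV[R]_d.
Variables (mul : A -> A -> A) (conj : A -> A) (one : A).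
Hypothesis mul_linr : forall (r : R) (a b c : A), mul a (r *: b + c) = r *: mul a b + mul a c.

Lemma in_SA_sqr a : in_SA mul one conj a -> mul a a = - one.
Proof.
case=> tr <-; have ca : conj a = - a by apply/eqP; rewrite -addr_eq0 addrC -/(trA conj a) tr.
by rewrite /nrmA ca (amulNr mul_linr) opprK.
Qed.

Lemma is_derive_amulr (V : normedModType R) (c : A) (f : V -> A) x v df :
  is_derive x v f df -> is_derive x v (fun y => mul c (f y)) (mul c df).
Proof.
have expand b : mul c b = \sum_(j < d) b ord0 j *: mul c (delta_mx ord0 j).
  rewrite {1}(row_sum_delta b) (amul_sumr mul_linr).
  by apply: eq_bigr => j _; rewrite (amulZr mul_linr).
have -> : (fun y => mul c (f y)) = \sum_(j < d) (fun y => f y ord0 j *: mul c (delta_mx ord0 j)).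
  by apply/funext => y; rewrite fct_sumE expand.
move=> f_df; rewrite expand; apply: is_derive_sum => j.
exact/is_deriveZl/is_derive_coord.
Qed.
End AlgebraProduct.

Section SplitSums.
Variables (V : zmodType) (m p : nat).

Lemma sum_gt_const (w : V) : \sum_(s < m.+1 | (p < s)%N) w = w *+ (m - p).
Proof. by rewrite -subSS -sumr_const_nat big_geq_mkord; apply: eq_bigl. Qed.

Lemma sum_neq0_split (H : 'I_m.+1 -> V) : (p <= m)%N ->
  \sum_(s < m.+1 | s != ord0) H s
    = \sum_(i < p.+1 | i != ord0) H (inord i) + \sum_(s < m.+1 | (p < s)%N) H s.
Proof.
move=> le_pm; rewrite (bigID (fun s : 'I_m.+1 => (p < s)%N)) /= addrC; congr (_ + _).
  rewrite (eq_bigl (fun i : 'I_p.+1 => i != 0%N :> nat)) //.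
  rewrite (big_ord_widen_cond m.+1 (fun i => i != 0%N) (fun i => H (inord i))) ?ltnS //.
  apply: eq_big => [s|s _]; last by rewrite inord_val.
  by rewrite -leqNgt ltnS.
by apply: eq_bigl => s; rewrite andb_idl //; apply: contraTneq => ->.
Qed.
End SplitSums.

Definition Dvec (R : realType) (d n : nat) (mul : 'rV[R]_d -> 'rV[R]_d -> 'rV[R]_d)
    (w : 'I_n.+1 -> 'rV[R]_d) (f : 'rV[R]_n.+1 -> 'rV[R]_d) (x : 'rV[R]_n.+1) : 'rV[R]_d :=
  \sum_(s < n.+1 | s != ord0) mul (w s) (partial s f x).

Lemma DopE (R : realType) (d n : nat) (mul : 'rV[R]_d -> 'rV[R]_d -> 'rV[R]_d) (one : 'rV[R]_d)
    (w : 'I_n.+1 -> 'rV[R]_d) (f : 'rV[R]_n.+1 -> 'rV[R]_d) x :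
  (forall a, mul one a = a) -> w ord0 = one -> Dop mul w f x = partial ord0 f x + Dvec mul w f x.
Proof. by move=> mul1l w0; rewrite /Dop (bigD1 ord0) //= w0 mul1l. Qed.

Section Paravector.
Variables (R : realType) (d : nat).
Local Notation A := 'rV[R]_d.
Variables (mul : A -> A -> A) (one : A).
Hypothesis mul_linl : forall (r : R) (a b c : A), mul (r *: a + b) c = r *: mul a c + mul b c.
Hypothesis mul_linr : forall (r : R) (a b c : A), mul a (r *: b + c) = r *: mul a b + mul a c.
Hypothesis mul1l : forall a, mul one a = a.
Hypothesis mul1r : forall a, mul a one = a.
Hypothesis mul_alt : forall a b, mul (mul a a) b = mul a (mul a b).
Variables (m : nat) (v : 'I_m.+1 -> A) (p : nat).
Hypothesis le_pm : (p <= m)%N.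
Hypothesis v0 : v ord0 = one.
Hypothesis v_sqr : forall s, s != ord0 -> mul (v s) (v s) = - one.
Hypothesis v_anticomm : forall s t, s != ord0 -> t != ord0 -> s != t ->
  mul (v s) (v t) = - mul (v t) (v s).

Local Notation X x := (xq p v x).
Local Notation xpow x j := (apow mul one (xq p v x) j).
Local Notation rho x := (normq2 p x).
Variable g : 'rV[R]_p.+1 -> A.
Hypothesis g_der : forall (i : 'I_p.+1) y, derivable g y (delta_mx ord0 i).

Lemma gt_neq0 (s : 'I_m.+1) : (p < s)%N -> s != ord0.
Proof. by apply: contraTneq => ->. Qed.

Lemma mul_xql x b : mul (X x) b = \sum_(s < m.+1 | (p < s)%N) x ord0 s *: mul (v s) b.
Proof. by rewrite (amul_suml mul_linl); apply: eq_bigr => s _; rewrite (amulZl mul_linl). Qed.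

Lemma xq_sqr x : mul (X x) (X x) = - rho x *: one.
Proof.
rewrite mul_xql (eq_bigr (fun s => \sum_(t < m.+1 | (p < t)%N)
   (x ord0 s * x ord0 t) *: mul (v s) (v t))); last first.
  move=> s _; rewrite /xq (amul_sumr mul_linr) scaler_sumr.
  by apply: eq_bigr => t _; rewrite (amulZr mul_linr) scalerA.
rewrite sum_antisym_offdiag => [|s t ps pt st]; last first.
  by rewrite v_anticomm ?gt_neq0 // scalerN mulrC.
rewrite /normq2 scaleNr scaler_suml -sumrN; apply: eq_bigr => s ps.
by rewrite v_sqr ?gt_neq0 // scalerN expr2.
Qed.

Lemma mul_xq_sqr x b : mul (X x) (mul (X x) b) = - rho x *: b.
Proof. exact: (amul_sqr_scale mul_linl mul1l mul_alt b (xq_sqr x)). Qed.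

Lemma mul_v_sqr s b : s != ord0 -> mul (v s) (mul (v s) b) = - b.
Proof.
move=> s0; rewrite -scaleN1r; apply: (amul_sqr_scale mul_linl mul1l mul_alt).
by rewrite v_sqr // scaleN1r.
Qed.

Lemma xpow_even x k : xpow x k.*2 = (- rho x) ^+ k *: one.
Proof.
elim: k => [|k IH]; first by rewrite scale1r.
by rewrite doubleS /= mul_xq_sqr IH scalerA exprS.
Qed.

Lemma xpow_odd x k : xpow x k.*2.+1 = (- rho x) ^+ k *: X x.
Proof. by rewrite /= xpow_even (amulZr mul_linr) mul1r. Qed.

Lemma v_xq_anticomm (s : 'I_m.+1) x b : s != ord0 -> (s <= p)%N ->
  mul (v s) (mul (X x) b) = - mul (X x) (mul (v s) b).
Proof.
move=> s0 sp; apply: (amul_anticomm mul_linl mul_linr mul_alt).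
rewrite mul_xql -sumrN /xq (amul_sumr mul_linr); apply: eq_bigr => t pt.
have st : s != t by apply: contraTneq pt => <-; rewrite -leqNgt.
by rewrite (amulZr mul_linr) (v_anticomm s0 (gt_neq0 pt) st) scalerN.
Qed.

Lemma v_xpow_comm (s : 'I_m.+1) x j b : s != ord0 -> (s <= p)%N ->
  mul (v s) (mul (xpow x j) b) = (-1) ^+ j *: mul (xpow x j) (mul (v s) b).
Proof.
move=> s0 sp; rewrite -[j]odd_double_half; case: (odd j) => /=.
all: rewrite -signr_odd /= odd_double /= ?expr1 ?expr0 ?scale1r ?scaleN1r.
  rewrite xpow_even (amulZr mul_linr) mul1r !(amulZl mul_linl) (amulZr mul_linr).
  by rewrite v_xq_anticomm ?scalerN.
by rewrite xpow_even !(amulZl mul_linl) (amulZr mul_linr) !mul1l.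
Qed.

Local Notation F j := (fun x => mul (xpow x j) (g (xpart p x))).

Lemma partial_F_low (i : 'I_p.+1) j x :
  partial (inord i) (F j) x = mul (xpow x j) (partial i g (xpart p x)).
Proof.
have Dg : is_derive (xpart p x) (delta_mx ord0 i) (fun y => mul (xpow x j) (g y))
    (mul (xpow x j) (partial i g (xpart p x))).
  exact/(is_derive_amulr mul_linr)/derivableP.
by apply: (partialE (is_derive_line _ Dg)) => h; rewrite xq_line_low ?xpart_line_low.
Qed.

Lemma partial_F_even_high (s : 'I_m.+1) k x : (p < s)%N ->
  partial s (F k.*2) x = (k%:R * (- rho x) ^+ k.-1 * (- (2 * x ord0 s))) *: g (xpart p x).
Proof.
move=> ps; pose phi (h : R) := - (rho x + h * (2 * x ord0 s + h)).
have Dphi : is_derive (0 : R) 1 (fun h => phi h ^+ k *: g (xpart p x))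
    ((k%:R * (- rho x) ^+ k.-1 * (- (2 * x ord0 s))) *: g (xpart p x)).
  exact/is_deriveZl/is_derive_quad_pow.
apply: (partialE (is_derive_line _ Dphi)) => h.
by rewrite xpow_even normq2_line_high ?xpart_line_high // (amulZl mul_linl) mul1l [_%:A]mulr1 addr0.
Qed.

Lemma partial_F_odd_high (s : 'I_m.+1) k x : (p < s)%N ->
  partial s (F k.*2.+1) x =
    (k%:R * (- rho x) ^+ k.-1 * (- (2 * x ord0 s))) *: mul (X x) (g (xpart p x))
    + (- rho x) ^+ k *: mul (v s) (g (xpart p x)).
Proof.
move=> ps; pose phi (h : R) := - (rho x + h * (2 * x ord0 s + h)).
have Dphi : is_derive (0 : R) 1
    ((fun h => phi h ^+ k *: mul (X x) (g (xpart p x)))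
     + (fun h => (phi h ^+ k * h) *: mul (v s) (g (xpart p x))))
    ((k%:R * (- rho x) ^+ k.-1 * (- (2 * x ord0 s))) *: mul (X x) (g (xpart p x))
     + (- rho x) ^+ k *: mul (v s) (g (xpart p x))).
  exact: is_deriveD (is_deriveZl _ (is_derive_quad_pow _ _ _))
                    (is_deriveZl _ (is_derive_quad_powX _ _ _)).
apply: (partialE (is_derive_line _ Dphi)) => h.
rewrite xpow_odd normq2_line_high ?xpart_line_high ?xq_line_high // [_%:A]mulr1 addr0 !fctE.
by rewrite (amulZl mul_linl) mul_linl scalerDr !scalerA addrC.
Qed.

Definition Dq (f : 'rV[R]_m.+1 -> A) (x : 'rV[R]_m.+1) : A :=
  \sum_(s < m.+1 | (p < s)%N) mul (v s) (partial s f x).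

Lemma partial0_F j x : partial ord0 (F j) x = mul (xpow x j) (partial ord0 g (xpart p x)).
Proof.
rewrite -(partial_F_low ord0) (_ : inord ord0 = ord0) //.
by apply: ord_inj; rewrite inord_lowK.
Qed.

Lemma Dvec_F j x : Dvec mul v (F j) x
  = (-1) ^+ j *: mul (xpow x j) (Dvec mul (vpart p v) g (xpart p x)) + Dq (F j) x.
Proof.
rewrite /Dvec (sum_neq0_split _ le_pm) (amul_sumr mul_linr) scaler_sumr; congr (_ + _).
apply: eq_bigr => i i0; rewrite partial_F_low v_xpow_comm //.
  by rewrite -(inj_eq val_inj) /= inord_lowK.
by rewrite inord_lowK -ltnS.
Qed.

Lemma scale_xpow_pred k x b :
  (k.*2)%:R *: mul (xpow x k.*2.-1) b = (2 * k%:R * (- rho x) ^+ k.-1) *: mul (X x) b.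
Proof.
(* For k = 0 the truncated exponent 0.-1 = 0 is harmless: both coefficients vanish. *)
case: k => [|k]; first by rewrite !mulr0 mul0r !scale0r.
rewrite -[k.+1.*2.-1]/(k.*2.+1) xpow_odd (amulZl mul_linl) scalerA -mul2n natrM.
by congr (_ *: _); ring.
Qed.

Lemma Dq_F_even k x : Dq (F k.*2) x = - ((k.*2)%:R *: mul (xpow x k.*2.-1) (g (xpart p x))).
Proof.
rewrite scale_xpow_pred mul_xql scaler_sumr -sumrN; apply: eq_bigr => s ps.
rewrite partial_F_even_high // (amulZr mul_linr) scalerA -[RHS]scaleNr; congr (_ *: _); ring.
Qed.

Lemma Dq_F_odd k x :
  Dq (F k.*2.+1) x = - ((k.*2 + (m - p))%:R *: mul (xpow x k.*2) (g (xpart p x))).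
Proof.
rewrite /Dq (eq_bigr (fun s => (- (2 * k%:R * (- rho x) ^+ k.-1)) *:
    (x ord0 s *: mul (v s) (mul (X x) (g (xpart p x))))
    - (- rho x) ^+ k *: g (xpart p x))); last first.
  move=> s ps; rewrite partial_F_odd_high // (amulDr mul_linr) !(amulZr mul_linr).
  rewrite mul_v_sqr ?gt_neq0 //.
  by rewrite scalerN scalerA; congr (_ *: _ - _); ring.
rewrite big_split /= -scaler_sumr -mul_xql mul_xq_sqr sumrN sum_gt_const xpow_even.
rewrite (amulZl mul_linl) mul1l !scalerA scalerMnl -scalerBl -[RHS]scaleNr.
congr (_ *: _); rewrite -[_ *+ (m - p)]mulr_natr natrD -mul2n natrM.
case: k => [|k]; rewrite ?succnK ?exprS; ring.
Qed.

Lemma Dop_F j x : Dop mul v (F j) x = mul (xpow x j)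
    (partial ord0 g (xpart p x) + (-1) ^+ j *: Dvec mul (vpart p v) g (xpart p x))
  + Dq (F j) x.
Proof.
rewrite (DopE _ _ mul1l v0) partial0_F Dvec_F.
by rewrite (amulDr mul_linr) (amulZr mul_linr) addrA.
Qed.

Lemma Dbar_F j x : Dbar mul v (F j) x = mul (xpow x j)
    (partial ord0 g (xpart p x) - (-1) ^+ j *: Dvec mul (vpart p v) g (xpart p x))
  - Dq (F j) x.
Proof.
rewrite /Dbar -/(Dvec mul v (F j) x) partial0_F Dvec_F.
by rewrite (amulDr mul_linr) (amulNr mul_linr) (amulZr mul_linr) opprD addrA.
Qed.

End Paravector.

Theorem lemma3p9 (R : realType) (d : nat)
  (mul : 'rV[R]_d -> 'rV[R]_d -> 'rV[R]_d) (one : 'rV[R]_d)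
  (conj : 'rV[R]_d -> 'rV[R]_d)
  (HA : alt_algebra_anti_inv mul one conj)
  (m : nat) (v : 'I_m.+1 -> 'rV[R]_d)
  (Hv : paravector_basis mul one conj v)
  (p : nat) (hp : (p < m)%N)
  (g : 'rV[R]_p.+1 -> 'rV[R]_d) (Hg : C1 g) (k : nat) :
  let q := (m - p)%N in
  let X := fun x : 'rV[R]_m.+1 => xq p v x in
  let F := fun (j : nat) (x : 'rV[R]_m.+1) => mul (apow mul one (X x) j) (g (xpart p x)) in
  (forall x : 'rV[R]_m.+1,
     Dop mul v (F k.*2) x =
       mul (apow mul one (X x) k.*2) (Dop mul (vpart p v) g (xpart p x))
       - (k.*2)%:R *: mul (apow mul one (X x) k.*2.-1) (g (xpart p x)))
  /\ (forall x : 'rV[R]_m.+1,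
     Dop mul v (F k.*2.+1) x =
       mul (apow mul one (X x) k.*2.+1) (Dbar mul (vpart p v) g (xpart p x))
       - (k.*2 + q)%:R *: mul (apow mul one (X x) k.*2) (g (xpart p x)))
  /\ (forall x : 'rV[R]_m.+1,
     Dbar mul v (F k.*2) x =
       mul (apow mul one (X x) k.*2) (Dbar mul (vpart p v) g (xpart p x))
       + (k.*2)%:R *: mul (apow mul one (X x) k.*2.-1) (g (xpart p x)))
  /\ (forall x : 'rV[R]_m.+1,
     Dbar mul v (F k.*2.+1) x =
       mul (apow mul one (X x) k.*2.+1) (Dop mul (vpart p v) g (xpart p x))
       + (k.*2 + q)%:R *: mul (apow mul one (X x) k.*2) (g (xpart p x))).
Proof.
move=> q X F; rewrite {}/F {}/X {}/q.
case: HA => _ [mul_linl mul_linr] mul1 alt _.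
have mul1l a : mul one a = a by case: (mul1 a).
have mul1r a : mul a one = a by case: (mul1 a).
have mul_alt a b : mul (mul a a) b = mul a (mul a b).
  by case: (alt a b) => /eqP; rewrite subr_eq0 => /eqP.
case: Hv => [[_ v0] v_SA v_anticomm _ _].
have v_sqr s : s != ord0 -> mul (v s) (v s) = - one.
  by move=> /v_SA; apply: in_SA_sqr.
have g_der i y : derivable g y (delta_mx ord0 i) by case: (Hg i) => + _; apply.
have le_pm := ltnW hp.
have vp0 : vpart p v ord0 = one by rewrite /vpart -v0; congr v; apply: ord_inj; rewrite inordK.
have sign_even : (-1) ^+ k.*2 = 1 :> R by rewrite -signr_odd odd_double.
have sign_odd : (-1) ^+ k.*2.+1 = -1 :> R by rewrite -signr_odd /= odd_double.
split; [|split; [|split]] => x.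
- by rewrite Dop_F // Dq_F_even // (DopE _ _ mul1l vp0) sign_even scale1r.
- by rewrite Dop_F // Dq_F_odd // sign_odd scaleN1r.
- by rewrite Dbar_F // Dq_F_even // opprK sign_even scale1r.
- by rewrite Dbar_F // Dq_F_odd // opprK sign_odd scaleN1r opprK (DopE _ _ mul1l vp0).
Qed.
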